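(* Let $P$ be a finite set of points in the plane in general position with $|P|$ even, and let $A\subseteq P$ be the union of the vertex sets of some connected components of the underlying graph of $P$. Then $|A|$ is even, and for any two points $a,b\in A$, the line through $a$ and $b$ is a halving line of the point set $A$ if and only if it is a halving line of $P$. Equivalently, the underlying graph of the point set $A$ equals the subgraph of the underlying graph of $P$ induced on $A$.
   Context: Points are in general position if no three are collinear. For a finite set $P$ of $n$ points in general position with $n$ even, a halving line of $P$ is a line through two points of $P$ that has exactly $(n-2)/2$ points of $P$ strictly on each side. The underlying graph of $P$ has vertex set $P$, and two points are adjacent if and only if the line through them is a halving line of $P$. *)

From HB Require Import structures.
From mathcomp Require Import all_boot all_order all_algebra.
Set Implicit Arguments. Unset Strict Implicit. Unset Printing Implicit Defensive.
Import Order.TTheory GRing.Theory Num.Theory.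

Local Open Scope ring_scope.

Section Planar.
Variable R : realFieldType.
Definition point := (R * R)%type.

(* Orientation determinant: > 0 iff r is strictly to the left of the directed
   line a -> b, < 0 iff strictly to the right, = 0 iff a, b, r collinear. *)
Definition orient (a b r : point) : R :=
  (b.1 - a.1) * (r.2 - a.2) - (b.2 - a.2) * (r.1 - a.1).

Definition general_position (P : seq point) : Prop :=
  forall p q r, p \in P -> q \in P -> r \in P ->
    p != q -> q != r -> p != r -> orient p q r != 0.

Definition halving (P : seq point) (a b : point) : bool :=
  [&& a \in P, b \in P, a != b,
      count (fun r => 0 < orient a b r) P == ((size P - 2) %/ 2)%N &
      count (fun r => orient a b r < 0) P == ((size P - 2) %/ 2)%N].

Definition adj (P : seq point) : rel point := fun a b => halving P a b.

Definition connected_in (P : seq point) (x y : point) : Prop :=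
  x \in P /\ exists s : seq point, path (adj P) x s /\ last x s = y.

(* A (a subset of P) is a union of vertex sets of connected components of the
   underlying graph of P: it is closed under being in the same component. *)
Definition union_of_components (P A : seq point) : Prop :=
  {subset A <= P} /\ forall x y, x \in A -> connected_in P x y -> y \in A.
End Planar.

From HB Require Import structures.
From mathcomp Require Import all_boot all_order all_algebra.
From mathcomp Require Import zify ring.
Import Order.TTheory GRing.Theory Num.Theory.
Set Implicit Arguments. Unset Strict Implicit.

(* Directions are vectors g acting on points by the functional lin g.  For a
   generic g (injective on P), the lower half of P consists of its |P|/2 points
   of smallest value, and lowA g counts the points of A in it.
   1. Two directions refining a common one differ only by swaps of points level
      in it; a swap across the median is a halving line, whose endpoints lie
      both in A or both outside, so lowA is unchanged (lowA_crossing).  Moving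
      along a segment of directions and crossing its finitely many critical
      parameters one at a time, lowA is the same for all generic directions
      (lowA_fam, lowA_connect).
   2. Reversing g swaps the two halves, so lowA g = |A| - lowA g: exactly half
      of A lies in each half and |A| is even (lowA_half, size_A_even).
   3. Tilting the normal of a line ab slightly gives a direction in which a, b
      have consecutive ranks above the points on one side of ab
      (pivot_direction); counting its lower half inside A and inside P shows
      that ab halves A iff it halves P (count_pivot, halving_transfer). *)

Section Counting.
Variable T : eqType.
Implicit Types (s : seq T) (p q : pred T).

Lemma sub_in_count s p q :
  {in s, forall x, q x -> p x} -> (count q s <= count p s)%N.
Proof.
elim: s => [//|a s IH] H /=; apply: leq_add; last first.
  by apply: IH => x xs; apply: H; rewrite inE xs orbT.
by case qa: (q a) => //; rewrite (H a (mem_head _ _) qa).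
Qed.

Lemma sub_in_count_lt s p q e :
  e \in s -> p e -> ~~ q e ->
  {in s, forall x, q x -> p x} -> (count q s < count p s)%N.
Proof.
elim: s => [//|a s IH] ein pe qe H /=.
have H' : {in s, forall x, q x -> p x} by move=> x xs; apply: H; rewrite inE xs orbT.
case: (eqVneq a e) => [ae|ane]; first subst a.
- by rewrite pe (negbTE qe) add0n add1n ltnS sub_in_count.
- move: ein; rewrite inE eq_sym (negbTE ane) /= => ein.
  rewrite -addnS; apply: leq_add; last exact: IH.
  by case qa: (q a) => //; rewrite (H a (mem_head _ _) qa).
Qed.

Lemma count_single_exception s p q e :
  uniq s -> e \in s -> p e -> ~~ q e ->
  {in s, forall x, x != e -> p x = q x} ->
  count p s = (count q s).+1.
Proof.
elim: s => [//|a s IH] /= /andP [ans us] ein pe qe H.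
case: (eqVneq a e) => [ae|ane].
- subst a; rewrite pe (negbTE qe) /= add0n add1n; congr _.+1.
  apply: eq_in_count => x xs; apply: H; first by rewrite inE xs orbT.
  by apply: contraNneq ans => <-.
- move: ein; rewrite inE eq_sym (negbTE ane) /= => ein.
  rewrite (H a (mem_head _ _) ane) IH // ?addnS // => x xs; apply: H.
  by rewrite inE xs orbT.
Qed.

Lemma count_swap s p q y y' :
  uniq s -> (y \in s) = (y' \in s) -> p y -> ~~ q y -> ~~ p y' -> q y' ->
  {in s, forall x, x != y -> x != y' -> p x = q x} ->
  count p s = count q s.
Proof.
move=> us yy' py qy py' qy' H.
case: (boolP (y \in s)) => ys; last first.
  have y's : y' \notin s by rewrite -yy'.
  apply: eq_in_count => x xs; apply: (H x xs).
  - by apply: contraTneq xs => ->.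
  - by apply: contraTneq xs => ->.
have y's : y' \in s by rewrite -yy'.
have -> : count p s = (count (predI p q) s).+1.
  apply: (@count_single_exception _ _ _ y) => //=; first by rewrite (negbTE qy) andbF.
  move=> x xs xy; case: (eqVneq x y') => [->|xy']; first by rewrite (negbTE py').
  by rewrite -(H x xs xy xy') andbb.
have -> // : count q s = (count (predI p q) s).+1.
apply: (@count_single_exception _ _ _ y') => //=; first by rewrite (negbTE py').
move=> x xs xy'; case: (eqVneq x y) => [->|xy]; first by rewrite (negbTE qy) andbF.
by rewrite (H x xs xy xy') andbb.
Qed.

Lemma count_pivot s (r : T -> nat) (neg : pred T) a b L h :
  uniq s -> a \in s -> b \in s -> a != b -> ~~ neg a -> ~~ neg b ->
  r a = L -> r b = L.+1 ->
  {in s, forall x, x != a -> x != b ->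
     (neg x -> (r x < L)%N) /\ (~~ neg x -> (L.+1 < r x)%N)} ->
  (count (fun x => r x < h)%N s == (count neg s).+1) = (L.+1 == h).
Proof.
move=> us aS bS ab na nb ra rb sides; case: (ltngtP L.+1 h) => [lt|gt|eq].
- have c1 : count (predU neg (pred1 a)) s = (count neg s).+1.
    apply: (@count_single_exception _ _ _ a) => //=; first by rewrite eqxx orbT.
    by move=> x _ /negbTE ->; rewrite orbF.
  have c2 : count (predU (predU neg (pred1 a)) (pred1 b)) s = (count neg s).+2.
    rewrite -c1; apply: (@count_single_exception _ _ _ b) => //=.
    - by rewrite eqxx orbT.
    - by rewrite (negbTE nb) eq_sym (negbTE ab).
    - by move=> x _ /negbTE ->; rewrite orbF.
  suff : (count neg s).+2 <= count (fun x => r x < h)%N s.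
    by move=> le; apply/negbTE; apply: contraTneq le => ->; rewrite ltnn.
  rewrite -c2; apply: sub_in_count => x xs /=.
  case: (eqVneq x a) => [->|xa]; first by rewrite ra; lia.
  case: (eqVneq x b) => [->|xb]; first by rewrite rb; lia.
  by have [down _] := sides x xs xa xb; rewrite !orbF => /down; lia.
- suff : count (fun x => r x < h)%N s <= count neg s.
    by move=> le; apply/negbTE; apply: contraTneq le => ->; rewrite ltnn.
  apply: sub_in_count => x xs /= xh; apply: contraT => nx.
  case: (eqVneq x a) => [xa|xa]; first by move: xh; rewrite xa ra; lia.
  case: (eqVneq x b) => [xb|xb]; first by move: xh; rewrite xb rb; lia.
  by have [_ /(_ nx)] := sides x xs xa xb; lia.
- rewrite (@count_single_exception _ _ neg a) ?eqxx ?ra ?eq //.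
  move=> x xs xa; case: (eqVneq x b) => [->|xb]; first by rewrite rb -eq ltnn (negbTE nb).
  have [down up] := sides x xs xa xb.
  by case: (boolP (neg x)) => [/down|/up]; lia.
Qed.

Lemma two_points s a b : uniq s -> a \in s -> b \in s -> a != b -> (1 < size s)%N.
Proof.
move=> us aS bS ab; have := @uniq_leq_size _ [:: a; b] s.
rewrite /= inE (negbTE ab) => /(_ isT); apply => z.
by rewrite !inE => /orP [] /eqP ->.
Qed.
End Counting.

Local Open Scope ring_scope.

Lemma count_trichotomy (R : realDomainType) (T : Type) (f : T -> R) (z : T)
    (s : seq T) :
  (count (fun y => f y < f z)%R s + count (fun y => f z < f y)%R s
   + count (fun y => f y == f z) s)%N = size s.
Proof. by elim: s => [//|a s IH] /=; rewrite -IH; case: ltgtP => /= _; lia. Qed.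

(* Arithmetic behind halving lines: with n - 2 points split into two sides,
   both sides have (n - 2) / 2 points as soon as one has. *)
Lemma balanced_counts (n cn cp : nat) : ~~ odd n -> (cn + cp + 2)%N = n ->
  (cp == ((n - 2) %/ 2)%N) && (cn == ((n - 2) %/ 2)%N) = (cn == n./2.-1).
Proof.
move=> evn E; apply/idP/idP => [/andP [_ /eqP ->]|/eqP cnE]; first by apply/eqP; lia.
by apply/andP; split; apply/eqP; lia.
Qed.

Lemma exists_between (R : realFieldType) (s : seq R) (a c : R) :
  a < c -> exists m, [/\ a < m, m < c & m \notin s].
Proof.
move=> ac; have ca : 0 < c - a by rewrite subr_gt0.
pose pt (k : nat) := a + (c - a) / k.+2%:R.
have pt_in k : a < pt k < c.
  rewrite ltrDl divr_gt0 ?ltr0n //= -ltrBrDl ltr_pdivrMr ?ltr0n //.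
  by rewrite ltr_pMr // ltr1n.
have pt_inj : injective pt.
  move=> i j /addrI /(mulfI (lt0r_neq0 ca)) /invr_inj /eqP.
  by rewrite eqr_nat => /eqP [].
have [/allP sub|/allPn [m /mapP [k _ ->] kn]] :=
  boolP (all (mem s) [seq pt k | k <- iota 0 (size s).+1]); last first.
  by have /andP [? ?] := pt_in k; exists (pt k).
have := uniq_leq_size _ sub; rewrite map_inj_uniq ?iota_uniq // => /(_ isT).
by rewrite size_map size_iota ltnn.
Qed.

Lemma exists_small_gap (R : realFieldType) (s : seq R) :
  exists2 t, 0 < t & forall y, y \in s -> 0 < y -> t < y.
Proof.
elim: s => [|y s [t t0 H]]; first by exists 1.
case: (ltP 0 y) => y0; last first.
  exists t => // z; rewrite inE => /orP [/eqP -> y0'|]; last exact: H.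
  by have := le_lt_trans y0 y0'; rewrite ltxx.
exists (Num.min t (y / 2)); first by rewrite lt_min t0 divr_gt0.
move=> z; rewrite inE => /orP [/eqP -> _|zs z0].
- by rewrite gt_min ltr_pdivrMr // ltr_pMr // ltr1n orbT.
- by rewrite gt_min (H z zs z0).
Qed.

Lemma seq_constant_or_lt (R : realFieldType) (s : seq R) :
  {in s &, forall a e, a = e} \/ exists a e, [/\ a \in s, e \in s & a < e].
Proof.
case: (boolP (all (pred1 (head 0 s)) s)) => [/allP same|/allPn [y ys yn]].
  by left => a e /same /eqP -> /same /eqP ->.
right; have hs : head 0 s \in s by case: (s) ys => //= x l _; rewrite mem_head.
case: (ltgtP y (head 0 s)) => [lt|gt|eq]; last by rewrite /= eq eqxx in yn.
- by exists y, (head 0 s).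
- by exists (head 0 s), y.
Qed.

Lemma affine_sign_change (R : realFieldType) (c0 c1 t0 t1 : R) :
  t0 < t1 -> c0 + t0 * c1 != 0 -> c0 + t1 * c1 != 0 ->
  (c0 + t0 * c1 < 0) != (c0 + t1 * c1 < 0) ->
  exists r, [/\ t0 < r, r < t1 & c0 + r * c1 = 0].
Proof.
move=> lt01 n0 n1 ch; have c1n : c1 != 0.
  by apply: contra ch => /eqP ->; rewrite !mulr0.
pose r := - c0 / c1; have E t : c0 + t * c1 = (t - r) * c1 by rewrite /r; field.
exists r; rewrite E subrr mul0r; split => //; rewrite ltNge; apply/negP => rle.
- have a0 : 0 < t0 - r.
    by rewrite subr_gt0 lt_neqAle rle andbT; apply: contra n0 => /eqP <-; rewrite E subrr mul0r.
  have a1 : 0 < t1 - r by rewrite subr_gt0 (le_lt_trans rle lt01).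
  by move: ch; rewrite !E !(mulrC _ c1) (pmulr_llt0 _ a0) (pmulr_llt0 _ a1) eqxx.
- have a1 : t1 - r < 0.
    by rewrite subr_lt0 lt_neqAle rle andbT; apply: contra n1 => /eqP ->; rewrite E subrr mul0r.
  have a0 : t0 - r < 0 by rewrite subr_lt0 (lt_le_trans lt01 rle).
  by move: ch; rewrite !E !(mulrC _ c1) (nmulr_llt0 _ a0) (nmulr_llt0 _ a1) eqxx.
Qed.

Section PlaneGeometry.
Variable R : realFieldType.
Implicit Types (g u b d : R * R) (p q s z w : point R).

Definition lin g (x : point R) : R := g.1 * x.1 + g.2 * x.2.
Definition det g u : R := g.1 * u.2 - g.2 * u.1.
Definition nonzero g : bool := (g.1 != 0) || (g.2 != 0).
Definition opp g : R * R := (- g.1, - g.2).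

Lemma lin_opp g x : lin (opp g) x = - lin g x.
Proof. by rewrite /lin /=; ring. Qed.

Lemma sqr_norm_gt0 u : nonzero u -> 0 < u.1 * u.1 + u.2 * u.2.
Proof.
move=> nz; rewrite -!expr2 lt_def paddr_eq0 ?sqr_ge0 // addr_ge0 ?sqr_ge0 //.
by rewrite !sqrf_eq0 negb_and ?andbT.
Qed.

Lemma level_orient g z w : nonzero g -> z != w -> lin g z = lin g w ->
  exists2 k, k != 0 & forall s, lin g s - lin g z = k * orient z w s.
Proof.
case: g => g1 g2; case: z => z1 z2; case: w => w1 w2.
rewrite /lin /orient /nonzero /= => gnz zw e.
have orth : g1 * (w1 - z1) + g2 * (w2 - z2) = 0.
  by apply: (@eq_trans _ _ ((g1 * w1 + g2 * w2) - (g1 * z1 + g2 * z2)));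
    [ring | rewrite e subrr].
have N0 : (w1 - z1) * (w1 - z1) + (w2 - z2) * (w2 - z2) != 0.
  rewrite gt_eqF // (@sqr_norm_gt0 (w1 - z1, w2 - z2)) //=.
  by apply: contraNT zw; rewrite negb_or !negbK !subr_eq0 => /andP [/eqP -> /eqP ->].
exists ((g2 * (w1 - z1) - g1 * (w2 - z2)) /
        ((w1 - z1) * (w1 - z1) + (w2 - z2) * (w2 - z2))).
  rewrite mulf_neq0 ?invr_eq0 //; apply: contraTneq gnz => num0.
  have E1 : g1 * ((w1 - z1) * (w1 - z1) + (w2 - z2) * (w2 - z2)) =
    (w1 - z1) * (g1 * (w1 - z1) + g2 * (w2 - z2))
    - (w2 - z2) * (g2 * (w1 - z1) - g1 * (w2 - z2)) by ring.
  have E2 : g2 * ((w1 - z1) * (w1 - z1) + (w2 - z2) * (w2 - z2)) =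
    (w2 - z2) * (g1 * (w1 - z1) + g2 * (w2 - z2))
    + (w1 - z1) * (g2 * (w1 - z1) - g1 * (w2 - z2)) by ring.
  move: E1 E2; rewrite orth num0 !mulr0 subrr addr0.
  by move=> /eqP + /eqP; rewrite !mulf_eq0 (negbTE N0) !orbF negb_or !negbK => -> ->.
case=> s1 s2 /=; apply: (mulfI N0).
have -> : ((w1 - z1) * (w1 - z1) + (w2 - z2) * (w2 - z2)) *
    (g1 * s1 + g2 * s2 - (g1 * z1 + g2 * z2)) =
  (g2 * (w1 - z1) - g1 * (w2 - z2)) * ((w1 - z1) * (s2 - z2) - (w2 - z2) * (s1 - z1))
  + (g1 * (w1 - z1) + g2 * (w2 - z2)) * ((w1 - z1) * (s1 - z1) + (w2 - z2) * (s2 - z2)).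
  by ring.
by rewrite orth mul0r addr0 mulrA mulrCA divff // mulr1.
Qed.

Lemma level_collinear g z w s : nonzero g ->
  lin g z = lin g w -> lin g s = lin g z -> orient z w s = 0.
Proof.
move=> gnz ezw esz; case: (eqVneq z w) => [<-|zw]; first by rewrite /orient; ring.
have [k kn Hk] := level_orient gnz zw ezw.
have : k * orient z w s == 0 by rewrite -Hk esz subrr.
by rewrite mulf_eq0 (negbTE kn) => /eqP.
Qed.

Lemma lin_pair_inj b d p q : det b d != 0 ->
  lin b p = lin b q -> lin d p = lin d q -> p = q.
Proof.
case: p => p1 p2; case: q => q1 q2; rewrite /lin /det /= => dn eb ed.
have E1 : det b d * (p1 - q1) = d.2 * (lin b (p1, p2) - lin b (q1, q2))
                                - b.2 * (lin d (p1, p2) - lin d (q1, q2)).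
  by rewrite /lin /det /=; ring.
have E2 : det b d * (p2 - q2) = b.1 * (lin d (p1, p2) - lin d (q1, q2))
                                - d.1 * (lin b (p1, p2) - lin b (q1, q2)).
  by rewrite /lin /det /=; ring.
rewrite /lin /= eb ed !subrr !mulr0 subrr in E1 E2.
move/eqP: E1; move/eqP: E2; rewrite /det !mulf_eq0 (negbTE dn) !subr_eq0 /=.
by move=> /eqP -> /eqP ->.
Qed.

End PlaneGeometry.

Lemma orient_swap (R : realFieldType) (z w s : point R) :
  orient w z s = - orient z w s.
Proof. by rewrite /orient; ring. Qed.

Lemma orient_first (R : realFieldType) (a b : point R) : orient a b a = 0.
Proof. by rewrite /orient; ring. Qed.

Lemma orient_second (R : realFieldType) (a b : point R) : orient a b b = 0.
Proof. by rewrite /orient; ring. Qed.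

Lemma halving_sym (R : realFieldType) (X : seq (point R)) z w :
  halving X z w = halving X w z.
Proof.
suff sym a b : halving X a b -> halving X b a by apply/idP/idP; apply: sym.
rewrite /halving => /and5P [aX bX ab cpos cneg]; rewrite bX aX eq_sym ab /=.
have -> : count (fun r => 0 < orient b a r) X = count (fun r => orient a b r < 0) X.
  by apply: eq_count => r; rewrite /= orient_swap oppr_gt0.
have -> : count (fun r => orient b a r < 0) X = count (fun r => 0 < orient a b r) X.
  by apply: eq_count => r; rewrite /= orient_swap oppr_lt0.
by rewrite cneg cpos.
Qed.

Section Configuration.
Variable R : realFieldType.
Variable P : seq (point R).
Hypothesis uP : uniq P.
Hypothesis gpP : general_position P.
Hypothesis evP : ~~ odd (size P).
Implicit Types (g f : R * R) (p q s y z : point R).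

Let h := (size P)./2.

Definition generic g := {in P &, forall p q, p != q -> lin g p != lin g q}.
Definition rank g z := count (fun s => lin g s < lin g z) P.
Definition lower g z := (rank g z < h)%N.
Definition refines g f :=
  {in P &, forall p q, lin f p != lin f q -> (lin g p < lin g q) = (lin f p < lin f q)}.

Lemma rank_ltE g s y : s \in P -> y \in P ->
  (rank g s < rank g y)%N = (lin g s < lin g y).
Proof.
move=> sP yP; case: ltP => [lt|le].
- apply: (@sub_in_count_lt _ _ _ _ s) => //=; first by rewrite ltxx.
  by move=> x _ xs; apply: lt_trans xs lt.
- apply/negbTE; rewrite -leqNgt; apply: sub_in_count => x _ xy.
  exact: lt_le_trans xy le.
Qed.

Lemma lower_opp g z : generic g -> z \in P -> lower (opp g) z = ~~ lower g z.
Proof.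
move=> gg zP; have := count_trichotomy (lin g) z P.
have -> : count (fun s => lin g s == lin g z) P = 1%N.
  transitivity (count_mem z P); last by rewrite count_uniq_mem // zP.
  apply: eq_in_count => s sP /=.
  by case: (eqVneq s z) => [->|sz]; rewrite ?eqxx // (negbTE (gg _ _ sP zP sz)).
have -> : count (fun s => lin g z < lin g s) P = rank (opp g) z.
  by apply: eq_count => s; rewrite /= !lin_opp ltrN2.
rewrite /lower -/(rank g z) /h; move: (rank g z) (rank _ z) evP => a c; lia.
Qed.

Lemma count_on_line X a b : uniq X -> {subset X <= P} -> a \in X -> b \in X ->
  a != b -> count (fun s => orient a b s == 0) X = 2%N.
Proof.
move=> uX XP aX bX ab.
rewrite (@eq_in_count _ _ (fun s => (s == a) || (s == b))); last first.
  move=> s sX; case: (eqVneq s a) => [->|sa]; first by rewrite orient_first eqxx.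
  case: (eqVneq s b) => [->|sb]; first by rewrite orient_second eqxx.
  by apply/negbTE/gpP; rewrite ?XP // eq_sym.
rewrite (@count_single_exception _ _ _ (pred1 b) a) ?eqxx //=.
- by rewrite (count_uniq_mem b uX) bX.
- by move=> x _ /negbTE ->.
Qed.

Lemma halving_neg X a b : uniq X -> {subset X <= P} -> a \in X -> b \in X ->
  a != b -> ~~ odd (size X) ->
  halving X a b = (count (fun s => orient a b s < 0) X == (size X)./2.-1).
Proof.
move=> uX XP aX bX ab evX; have := count_trichotomy (orient a b) a X.
rewrite orient_first count_on_line // /halving aX bX ab /=.
exact: balanced_counts.
Qed.

Lemma halving_pos X a b : uniq X -> {subset X <= P} -> a \in X -> b \in X ->
  a != b -> ~~ odd (size X) ->
  halving X a b = (count (fun s => 0 < orient a b s) X == (size X)./2.-1).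
Proof.
move=> uX XP aX bX ab evX; rewrite halving_sym halving_neg // 1?eq_sym //.
suff -> : count (fun s => orient b a s < 0) X = count (fun s => 0 < orient a b s) X by [].
by apply: eq_count => s; rewrite /= orient_swap oppr_lt0.
Qed.

Lemma halving_of_level f y y' : nonzero f -> y \in P -> y' \in P -> y != y' ->
  lin f y = lin f y' -> count (fun s => lin f s < lin f y) P = h.-1 ->
  halving P y y'.
Proof.
move=> nzf yP y'P yy' lev below; have [k kn Hk] := level_orient nzf yy' lev.
have below_sgn s : (lin f s < lin f y) = (k * orient y y' s < 0).
  by rewrite -Hk subr_lt0.
case: (ltgtP k 0) => [kneg|kpos|k0]; last by rewrite k0 eqxx in kn.
- rewrite halving_pos //; apply/eqP; rewrite -[RHS]below; apply: eq_count => s.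
  by rewrite /= below_sgn nmulr_rlt0.
- rewrite halving_neg //; apply/eqP; rewrite -[RHS]below; apply: eq_count => s.
  by rewrite /= below_sgn pmulr_rlt0.
Qed.

Section Crossing.
Variables g0 g1 f : R * R.
Hypothesis nzf : nonzero f.
Hypothesis gen0 : generic g0.
Hypotheses (ref0 : refines g0 f) (ref1 : refines g1 f).

(* If y leaves the lower half from g0 to g1, some y' overtakes it, and as
   both orders refine f, y' is level with y in f. *)
Lemma crossing_partner y : y \in P -> lower g0 y -> ~~ lower g1 y ->
  exists2 y', y' \in P &
    [/\ y != y', lin f y' = lin f y, lin g0 y < lin g0 y' & lin g1 y' < lin g1 y].
Proof.
move=> yP low0 nlow1.
have [y' y'P /andP [below1 nbelow0]] :
    exists2 y', y' \in P & (lin g1 y' < lin g1 y) && ~~ (lin g0 y' < lin g0 y).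
  apply/hasP; apply: contraNT nlow1 => /hasPn nodrop.
  rewrite /lower (leq_ltn_trans _ low0) //; apply: sub_in_count => s sP below.
  by move: (nodrop s sP); rewrite below negbK.
have yy' : y != y' by apply: contraTneq below1 => <-; rewrite ltxx.
exists y' => //; split => //.
- apply/eqP; apply: contraNT nbelow0 => ne.
  by rewrite (ref0 y'P yP ne) -(ref1 y'P yP ne).
- by have := gen0 yP y'P yy'; rewrite neq_lt (negbTE nbelow0) orbF.
Qed.

(* Then y and y' exchange their places: y y' is a halving line, and no other
   point changes half, since by general position it is not level with y. *)
Lemma crossing_exchange y : y \in P -> lower g0 y -> ~~ lower g1 y ->
  exists y', [/\ y' \in P, halving P y y', ~~ lower g0 y', lower g1 y' &
    {in P, forall s, s != y -> s != y' -> lower g0 s = lower g1 s}].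
Proof.
move=> yP low0 nlow1.
have [y' y'P [yy' tie above0 below1]] := crossing_partner yP low0 nlow1.
have agree s : s \in P -> s != y -> s != y' ->
    lin g0 s < lin g0 y = (lin f s < lin f y) /\ lin g1 s < lin g1 y = (lin f s < lin f y).
  move=> sP sy sy'; have nt : lin f s != lin f y.
    apply/eqP => e; have := gpP yP y'P sP yy'; rewrite 2![_ == s]eq_sym sy sy'.
    by rewrite (level_collinear nzf (esym tie) e) eqxx => /(_ isT isT).
  by split; [apply: ref0 | apply: ref1].
have rank1 : rank g1 y = (rank g0 y).+1.
  apply: (count_single_exception uP y'P) => //; first by rewrite -leNgt ltW.
  move=> s sP sy'; case: (eqVneq s y) => [->|sy]; first by rewrite !ltxx.
  by case: (agree s sP sy sy') => -> ->.
have rank0 : (rank g0 y).+1 = h by move: low0 nlow1; rewrite /lower rank1; lia.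
have hv : halving P y y'.
  apply: (halving_of_level nzf yP y'P yy' (esym tie)).
  rewrite -rank0 /=; apply: eq_in_count => s sP /=.
  case: (eqVneq s y) => [->|sy]; first by rewrite !ltxx.
  case: (eqVneq s y') => [->|sy']; first by rewrite tie ltxx ltNge ltW.
  by case: (agree s sP sy sy') => ->.
have lower0E s : s \in P -> lower g0 s = ~~ (lin g0 y < lin g0 s).
  by move=> sP; rewrite /lower -rank0 ltnS leqNgt rank_ltE.
have lower1E s : s \in P -> lower g1 s = (lin g1 s < lin g1 y).
  by move=> sP; rewrite /lower -rank0 -rank1 rank_ltE.
exists y'; split => //; rewrite ?lower0E ?lower1E ?above0 // => s sP sy sy'.
rewrite lower0E // lower1E // -leNgt le_eqVlt (negbTE (gen0 sP yP sy)) /=.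
by case: (agree s sP sy sy') => -> ->.
Qed.
End Crossing.

Section Segment.
Variables b d : R * R.
Hypothesis bd : det b d != 0.

Definition fam t : R * R := (b.1 + t * d.1, b.2 + t * d.2).

Lemma lin_fam t x : lin (fam t) x = lin b x + t * lin d x.
Proof. by rewrite /lin /=; ring. Qed.

Lemma fam_nonzero t : nonzero (fam t).
Proof.
apply: contraTT bd; rewrite negb_or !negbK /det /= => /andP [/eqP e1 /eqP e2].
rewrite (_ : b.1 = - (t * d.1)); last by apply/eqP; rewrite -subr_eq0 opprK e1.
rewrite (_ : b.2 = - (t * d.2)); last by apply/eqP; rewrite -subr_eq0 opprK e2.
by apply/eqP; ring.
Qed.

Definition crit p q := - (lin b p - lin b q) / (lin d p - lin d q).
Definition crits := [seq crit p q | p <- P, q <- P].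

Lemma tie_crit t p q : p \in P -> q \in P -> p != q ->
  lin (fam t) p = lin (fam t) q -> t \in crits.
Proof.
move=> pP qP pq /eqP; rewrite -subr_eq0 !lin_fam.
rewrite (_ : _ - _ = lin b p - lin b q + t * (lin d p - lin d q)); last by ring.
move=> /eqP e; have dpq : lin d p - lin d q != 0.
  apply: contra pq; rewrite subr_eq0 => /eqP dE; apply/eqP.
  apply: (lin_pair_inj bd _ dE); apply/eqP; rewrite -subr_eq0.
  by move: e; rewrite dE subrr mulr0 addr0 => ->.
suff -> : t = crit p q by apply: allpairs_f.
by apply: (mulIf dpq); rewrite /crit divfK //; apply/eqP; rewrite -addr_eq0 addrC e.
Qed.

Lemma generic_fam t : t \notin crits -> generic (fam t).
Proof. by move=> tc p q pP qP pq; apply/eqP => e; rewrite (tie_crit pP qP pq e) in tc. Qed.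

Definition gap t0 t1 := forall c, c \in crits -> t0 < c -> c < t1 -> False.

Lemma order_stable t0 t1 p q : t0 < t1 -> gap t0 t1 -> p \in P -> q \in P ->
  lin (fam t0) p != lin (fam t0) q -> lin (fam t1) p != lin (fam t1) q ->
  (lin (fam t0) p < lin (fam t0) q) = (lin (fam t1) p < lin (fam t1) q).
Proof.
move=> lt01 g01 pP qP n0 n1; apply/eqP; apply: contraT => ne; exfalso.
have pq : p != q by apply: contraNneq n0 => ->.
have E t : lin (fam t) p - lin (fam t) q = (lin b p - lin b q) + t * (lin d p - lin d q).
  by rewrite !lin_fam; ring.
have := @affine_sign_change _ (lin b p - lin b q) (lin d p - lin d q) t0 t1 lt01.
rewrite -!E !subr_eq0 !subr_lt0 => /(_ n0 n1 ne) [r [r0 r1]].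
rewrite -E => /eqP; rewrite subr_eq0 => /eqP tie.
exact: g01 (tie_crit pP qP pq tie) r0 r1.
Qed.

Lemma refines_fam_lt t x : t < x -> gap t x -> generic (fam t) ->
  refines (fam t) (fam x).
Proof.
move=> tx gtx gent p q pP qP nx; apply: order_stable => //.
by apply: gent => //; apply: contraNneq nx => ->.
Qed.

Lemma refines_fam_gt t x : x < t -> gap x t -> generic (fam t) ->
  refines (fam t) (fam x).
Proof.
move=> xt gxt gent p q pP qP nx; symmetry; apply: order_stable => //.
by apply: gent => //; apply: contraNneq nx => ->.
Qed.

Definition inner t0 t1 := undup [seq c <- crits | (t0 < c) && (c < t1)].

Lemma mem_inner t0 t1 c : (c \in inner t0 t1) = [&& c \in crits, t0 < c & c < t1].
Proof. by rewrite mem_undup mem_filter andbC andbA. Qed.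
End Segment.

(* Tilting the normal direction of a line ab slightly, a and b get consecutive
   ranks, the points of P on the negative side of ab rank below them and the
   other ones above them. *)
Lemma pivot_direction a b : a \in P -> b \in P -> a != b ->
  exists f, [/\ nonzero f, generic f,
    rank f a = count (fun s => orient a b s < 0) P,
    rank f b = (rank f a).+1 &
    {in P, forall s, s != a -> s != b ->
      (orient a b s < 0 -> (rank f s < rank f a)%N) /\
      (~~ (orient a b s < 0) -> ((rank f a).+1 < rank f s)%N)}].
Proof.
move=> aP bP ab; pose u := (b.1 - a.1, b.2 - a.2); pose v := (- u.2, u.1).
have nzu : nonzero u.
  apply: contraNT ab; rewrite negb_or !negbK !subr_eq0 => /andP [/eqP e1 /eqP e2].
  by rewrite [a]surjective_pairing [b]surjective_pairing e1 e2.
have Nu := sqr_norm_gt0 nzu.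
have vu : det v u != 0.
  have -> : det v u = - (u.1 * u.1 + u.2 * u.2) by rewrite /det /v /u /=; ring.
  by rewrite oppr_eq0 lt0r_neq0.
have lev s : lin (fam v u 0) s - lin (fam v u 0) a = orient a b s.
  by rewrite !lin_fam /lin /orient /=; ring.
have [tp tp0 small] := exists_small_gap (crits v u).
have tpn : tp \notin crits v u by apply: contraT => /negbNE /small /(_ tp0); rewrite ltxx.
pose f := fam v u tp; have genf : generic f := generic_fam vu tpn.
have ref : refines f (fam v u 0).
  apply: refines_fam_gt => // c cc c0 ctp.
  by have := lt_trans ctp (small c cc c0); rewrite ltxx.
have fab : lin f a < lin f b.
  rewrite -subr_gt0 !lin_fam (_ : _ - _ = tp * (u.1 * u.1 + u.2 * u.2)) ?mulr_gt0 //.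
  by rewrite /lin /=; ring.
have off s : s \in P -> s != a -> s != b ->
    (lin f s < lin f a) = (orient a b s < 0) /\ (lin f s < lin f b) = (orient a b s < 0).
  move=> sP sa sb; have ns : orient a b s != 0 by apply: gpP; rewrite // eq_sym.
  have lva : lin (fam v u 0) b = lin (fam v u 0) a.
    by apply/eqP; rewrite -subr_eq0 lev orient_second.
  rewrite -lev subr_lt0.
  by split; rewrite ref // -?lva // -subr_eq0 ?lva lev.
have rank_a : rank f a = count (fun s => orient a b s < 0) P.
  apply: eq_in_count => s sP /=; case: (eqVneq s a) => [->|sa].
    by rewrite ltxx orient_first ltxx.
  case: (eqVneq s b) => [->|sb]; last by case: (off s sP sa sb).
  by rewrite orient_second ltxx; apply/negbTE; rewrite -leNgt ltW.
have rank_b : rank f b = (rank f a).+1.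
  rewrite rank_a; apply: (count_single_exception uP aP) => //.
    by rewrite orient_first ltxx.
  move=> s sP sa; case: (eqVneq s b) => [->|sb]; last by case: (off s sP sa sb).
  by rewrite ltxx orient_second ltxx.
exists f; split; rewrite ?fam_nonzero // => s sP sa sb; have [lta ltb] := off s sP sa sb.
split=> [neg|nneg]; first by rewrite rank_ltE // lta.
rewrite -rank_b rank_ltE // lt_neqAle eq_sym (genf _ _ sP bP sb) /= leNgt ltb.
by [].
Qed.
End Configuration.

Section Components.
Variable R : realFieldType.
Variables P A : seq (point R).
Hypothesis uP : uniq P.
Hypothesis gpP : general_position P.
Hypothesis evP : ~~ odd (size P).
Hypothesis uA : uniq A.
Hypothesis compA : union_of_components P A.
Implicit Types (g f b d : R * R) (p q s y z : point R).

Lemma A_sub_P : {subset A <= P}. Proof. by case: compA. Qed.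

(* A halving line of P joins two points of the same component. *)
Lemma halving_closed z w : halving P z w -> (z \in A) = (w \in A).
Proof.
suff closed a c : halving P a c -> a \in A -> c \in A.
  by move=> hv; apply/idP/idP; apply: closed; rewrite // halving_sym.
move=> hv aA; case: compA => _; apply; first exact: aA.
by split; [case/and5P: hv | exists [:: c]; rewrite /= /adj hv].
Qed.

Definition lowA g := count (lower P g) A.

Lemma lowA_opp g : generic P g -> lowA (opp g) = (size A - lowA g)%N.
Proof.
move=> gg; rewrite /lowA -(count_predC (lower P g) A) addKn.
by apply: eq_in_count => z zA; apply: lower_opp => //; apply: A_sub_P.
Qed.

(* Two generic directions refining a common nonzero f have the same lowA:
   points changing half come in pairs spanning halving lines. *)
Lemma lowA_crossing g0 g1 f : nonzero f -> generic P g0 -> generic P g1 ->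
  refines P g0 f -> refines P g1 f -> lowA g0 = lowA g1.
Proof.
move=> nzf gen0 gen1 ref0 ref1.
have exch a c y : generic P a -> refines P a f -> refines P c f ->
    y \in P -> lower P a y -> ~~ lower P c y -> lowA a = lowA c.
  move=> ga ra rc yP la nlc.
  have [y' [y'P hv nla lc others]] := crossing_exchange uP gpP evP nzf ga ra rc yP la nlc.
  apply: (count_swap uA (halving_closed hv) la nlc nla lc) => x xA.
  exact: others (A_sub_P xA).
case: (boolP (has (fun y => lower P g0 y != lower P g1 y) P)) => [/hasP [y yP]|/hasPn same].
- case: (boolP (lower P g0 y)) => l0 ne.
    by apply: (exch _ _ y) => //; apply: contra ne => ->.
  by symmetry; apply: (exch _ _ y) => //; move: ne; case: (lower P g1 y).
- by apply: eq_in_count => z zA; move: (same z (A_sub_P zA)); rewrite negbK => /eqP.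
Qed.

Section SegmentInvariance.
Variables b d : R * R.
Hypothesis bd : det b d != 0.
Local Notation fam := (fam b d).
Local Notation crits := (crits P b d).
Local Notation inner := (inner P b d).

Lemma lowA_fam_step t0 x t1 : t0 < x -> x < t1 ->
  generic P (fam t0) -> generic P (fam t1) ->
  (forall c, c \in crits -> t0 < c -> c < t1 -> c = x) ->
  lowA (fam t0) = lowA (fam t1).
Proof.
move=> t0x xt1 g0 g1 once.
apply: (lowA_crossing (fam_nonzero bd x) g0 g1).
- apply: (refines_fam_lt bd) => // c cc c0 cx.
  by move: (cx); rewrite (once c cc c0 (lt_trans cx xt1)) ltxx.
- apply: (refines_fam_gt bd) => // c cc xc c1.
  by move: (xc); rewrite (once c cc (lt_trans t0x xc) c1) ltxx.
Qed.

Lemma lowA_fam_simple t0 t1 : t0 < t1 ->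
  generic P (fam t0) -> generic P (fam t1) ->
  {in inner t0 t1 &, forall a e, a = e} -> lowA (fam t0) = lowA (fam t1).
Proof.
move=> lt01 g0 g1 simple; case E: (inner t0 t1) => [|c cs].
- have [mid0 mid1] := midf_lt lt01; apply: (lowA_fam_step mid0 mid1) => // c cc c0 c1.
  have cI : c \in inner t0 t1 by rewrite mem_inner cc c0 c1.
  by rewrite E in cI.
- have cI : c \in inner t0 t1 by rewrite E mem_head.
  move: (cI); rewrite mem_inner => /and3P [_ c0 c1].
  apply: (lowA_fam_step c0 c1) => // c' c'c c'0 c'1.
  by apply: simple; rewrite // mem_inner c'c c'0 c'1.
Qed.

(* Splitting at the noncritical parameters, lowA is constant along the segment. *)
Lemma lowA_fam t0 t1 : t0 < t1 -> generic P (fam t0) -> generic P (fam t1) ->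
  lowA (fam t0) = lowA (fam t1).
Proof.
move: {2}(size (inner t0 t1)) (leqnn (size (inner t0 t1))) => N.
elim: N t0 t1 => [|N IH] t0 t1 sz lt01 g0 g1;
  (have [simple|[a [e [aI eI ae]]]] := seq_constant_or_lt (inner t0 t1);
     first exact: lowA_fam_simple).
  by move: sz; rewrite leqn0 => /nilP E; rewrite E in aI.
have [m [am me mc]] := exists_between crits ae.
move: (aI) (eI); rewrite !mem_inner => /and3P [ac a0 a1] /and3P [ec e0 e1].
have t0m := lt_trans a0 am; have mt1 := lt_trans me e1.
have shorter u v w : u \in inner t0 t1 -> u \notin inner v w ->
    {subset inner v w <= inner t0 t1} -> (size (inner v w) <= N)%N.
  move=> uI un sub; rewrite -ltnS (leq_trans _ sz) //.
  have := @uniq_leq_size _ (u :: inner v w) (inner t0 t1).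
  rewrite /= un undup_uniq => /(_ isT); apply => z; rewrite inE.
  by case/orP => [/eqP ->|/sub].
have gm := generic_fam bd mc.
rewrite (IH t0 m) ?(IH m t1) //.
- apply: (shorter a) => // [|z]; first by rewrite mem_inner ltNge (ltW am) andbF.
  by rewrite !mem_inner => /and3P [-> mz ->]; rewrite (lt_trans t0m mz).
- apply: (shorter e) => // [|z]; first by rewrite mem_inner (ltNge e m) (ltW me) !andbF.
  by rewrite !mem_inner => /and3P [-> -> zm]; rewrite (lt_trans zm mt1).
Qed.
End SegmentInvariance.

Lemma lowA_connect g g' : det g g' != 0 -> generic P g -> generic P g' ->
  lowA g = lowA g'.
Proof.
move=> gg' gen gen'; pose d := (g'.1 - g.1, g'.2 - g.2).
have gd : det g d != 0 by rewrite (_ : det g d = det g g') // /det /=; ring.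
have f0 : fam g d 0 = g by rewrite /fam !mul0r !addr0 -surjective_pairing.
have f1 : fam g d 1 = g' by rewrite /fam /d /= !mul1r !subrKC -surjective_pairing.
by have := @lowA_fam g d gd 0 1 ltr01; rewrite f0 f1; apply.
Qed.

(* Rotating a generic direction by a half turn through an independent generic
   direction shows that exactly half of A lies in the lower half of P. *)
Lemma lowA_half g : nonzero g -> generic P g -> ((lowA g).*2 = size A)%N.
Proof.
move=> nzg gen; have N0 := lt0r_neq0 (sqr_norm_gt0 nzg).
pose q := (- g.2, g.1).
have qg : det q g != 0.
  by rewrite /det /= (_ : _ - _ = - (g.1 * g.1 + g.2 * g.2)) ?oppr_eq0 //; ring.
have [s [_ _ sn]] := exists_between (crits P q g) ltr01.
have genk := generic_fam qg sn.
have gk : det g (fam q g s) != 0.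
  by rewrite /det /= (_ : _ - _ = g.1 * g.1 + g.2 * g.2) //; ring.
have ngk : det (opp g) (fam q g s) != 0.
  by rewrite /det /= (_ : _ - _ = - (g.1 * g.1 + g.2 * g.2)) ?oppr_eq0 //; ring.
have genn : generic P (opp g).
  by move=> x y xP yP xy; rewrite !lin_opp eqr_opp gen.
have := lowA_connect gk gen genk; have := lowA_connect ngk genn genk.
rewrite lowA_opp // => <-; have := count_size (lower P g) A; rewrite /lowA; lia.
Qed.

(* Some direction is generic, so |A| is twice its lowA. *)
Lemma size_A_even : ~~ odd (size A).
Proof.
have bd : det (1, 0) (0, 1) != 0 :> R by rewrite /det /= mulr1 mulr0 subr0 oner_eq0.
have [s [_ _ sn]] := exists_between (crits P (1, 0) (0, 1)) ltr01.
by rewrite -(lowA_half (fam_nonzero bd s) (generic_fam bd sn)) odd_double.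
Qed.

Lemma halving_transfer a b : a \in A -> b \in A -> halving A a b = halving P a b.
Proof.
move=> aA bA; case: (eqVneq a b) => [<-|ab]; first by rewrite /halving !eqxx !andbF.
have aP := A_sub_P aA; have bP := A_sub_P bA.
have [f [nzf genf ra rb sides]] := pivot_direction uP gpP aP bP ab.
rewrite (halving_neg gpP uA A_sub_P aA bA ab size_A_even).
rewrite (halving_neg gpP uP (fun _ => id) aP bP ab evP) -ra.
have predE m n : (0 < n)%N -> (m == n.-1) = (m.+1 == n).
  by move=> n0; rewrite -eqSS prednK.
have halfA := lowA_half nzf genf.
rewrite -halfA doubleK !predE ?half_gt0 ?(two_points uP aP bP ab) //; last first.
  by rewrite -double_gt0 halfA (ltn_trans _ (two_points uA aA bA ab)).
rewrite eq_sym; apply: (@count_pivot _ A (rank P f) _ a b) => //.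
- by rewrite orient_first ltxx.
- by rewrite orient_second ltxx.
- by move=> x xA; apply: sides; apply: A_sub_P.
Qed.
End Components.

Theorem mainTheorem5 (R : realFieldType) (P A : seq (point R)) :
  uniq P -> general_position P -> ~~ odd (size P) ->
  uniq A -> union_of_components P A ->
  ~~ odd (size A) /\
  (forall a b, a \in A -> b \in A -> halving A a b = halving P a b).
Proof.
move=> uP gpP evP uA compA; split; first exact: (size_A_even uP gpP evP uA compA).
exact: (halving_transfer uP gpP evP uA compA).
Qed.
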